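(* There is an absolute constant $c>0$ such that the following holds. Let $X,Y$ be a section-pair with $m\ge 12$ chords, and suppose that each vertex of $X$ is incident to at most one chord. Then there are two paths $P,P'$ in $H(X,Y)$ between $x^{t}$ and $y^{t}$ such that $|P'|\ge |P|+cm$, and there are two paths $Q,Q'$ in $H(X,Y)$ between $x^{b}$ and $y^{b}$ such that $|Q'|\ge|Q|+cm$.
   Context: A section-pair in a graph $G$ is a pair $X,Y$ of vertex-disjoint paths; the two endpoints of $X$ are designated its top $x^{t}$ and bottom $x^{b}$, and those of $Y$ its top $y^t$ and bottom $y^b$. A chord is an edge of $G$ with one endpoint in $X$ and one in $Y$. $H(X,Y)$ is the graph with vertex set $V(X)\cup V(Y)$ whose edges are the edges of $X$, the edges of $Y$ and the chords. $|P|$ is the number of edges of a path $P$. *)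

From mathcomp Require Import all_boot all_order all_algebra.
Set Implicit Arguments. Unset Strict Implicit. Unset Printing Implicit Defensive.

Section Defs.
Variable T : finType.

(* A path in a graph with adjacency relation r, between a and b:
   the vertex sequence a :: s, consecutive vertices adjacent, all vertices
   distinct, ending in b.  Its number of edges is size s. *)
Definition gpath (r : rel T) (a b : T) (s : seq T) : Prop :=
  [/\ path r a s, uniq (a :: s) & last a s = b].

Definition path_edge (p : seq T) (u v : T) : bool :=
  ((u, v) \in zip p (behead p)) || ((v, u) \in zip p (behead p)).

Definition chord (e : rel T) (X Y : seq T) (u v : T) : bool :=
  e u v && (((u \in X) && (v \in Y)) || ((u \in Y) && (v \in X))).

(* The set of chords, each counted once as the ordered pair (x, y) with
   x on X and y on Y (X and Y are vertex-disjoint). *)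
Definition chords (e : rel T) (X Y : seq T) : {set T * T} :=
  [set p : T * T | (p.1 \in X) && (p.2 \in Y) && e p.1 p.2].

Definition Hrel (e : rel T) (X Y : seq T) : rel T :=
  fun u v => [|| path_edge X u v, path_edge Y u v | chord e X Y u v].

End Defs.

From mathcomp Require Import all_boot all_order all_algebra.
From mathcomp Require Import zify.
From mathcomp.algebra_tactics Require Import lra.
From Stdlib Require Import Classical_Prop.
Set Implicit Arguments. Unset Strict Implicit. Unset Printing Implicit Defensive.
Import Order.TTheory GRing.Theory Num.Theory.

(* Number the vertices of X from x^t and those of Y from y^t, and record a chord
   as the pair (p, q) of the positions of its ends.  As every vertex of X meets at
   most one chord, the m chords have distinct first coordinates; list them along X.
   The chord c = (p, q) gives the path x_0 .. x_p y_q .. y_0 of length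
   weight c = p + q + 1.  A "zigzag chain" c_1, ..., c_(2k+1) of chords, going
   forwards along X and backwards along Y, gives the path
   x_0 -> x_p1 -> y_q1 -> y_q2 -> x_p2 -> x_p3 -> y_q3 -> ... -> y_0
   of length zigzag_len = 2k + weight c_1 - weight c_2 + ... + weight c_(2k+1). *)

Lemma seq_pair_ind (A : Type) (P : seq A -> Prop) :
  P [::] -> (forall a, P [:: a]) -> (forall a b s, P s -> P [:: a, b & s]) ->
  forall s, P s.
Proof.
move=> P0 P1 P2 s; suff: P s /\ forall a, P (a :: s) by case.
by elim: s => [|a s [Ps Pas]]; split => // b; apply: P2.
Qed.

Section WeightedSequences.
Local Open Scope ring_scope.
Variables (A : eqType) (L : A -> int).

Fixpoint alt_sum (s : seq A) : int := if s is a :: s' then L a - alt_sum s' else 0.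

(* For a zigzag chain of chords s, the length of the corresponding path. *)
Definition zigzag_len (s : seq A) : int := (size s)%:Z - 1 + alt_sum s.

Fixpoint total_var (s : seq A) : int :=
  if s is a :: s' then (if s' is b :: _ then `|L b - L a| + total_var s' else 0)
  else 0.

Lemma total_var_cons2 a b s : total_var [:: a, b & s] = `|L b - L a| + total_var (b :: s).
Proof. by []. Qed.

Lemma zigzag_len1 a : zigzag_len [:: a] = L a.
Proof. rewrite /zigzag_len /=; lia. Qed.

Lemma zigzag_len2 a b s : zigzag_len [:: a, b & s] = zigzag_len s + 2 + L a - L b.
Proof. rewrite /zigzag_len /=; lia. Qed.

Lemma alt_sum_rcons s b :
  alt_sum (rcons s b) = alt_sum s + (if odd (size s) then - L b else L b).
Proof. by elim: s => [|a s IH] /=; [lia | rewrite IH; case: (odd (size s)) => /=; lia]. Qed.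

(* A sequence with large total variation contains a long odd zigzag: keeping
   only alternate local maxima and minima of L, every ascent and descent of L
   along x :: l contributes to the alternating sum. *)
Lemma total_var_zigzag (l : seq A) x mu :
  (forall c, c \in x :: l -> mu <= L c) ->
  exists2 s, subseq s (x :: l) & odd (size s) /\ total_var (x :: l) + L x + mu <= 2 * zigzag_len s.
Proof.
move: (leqnn (size l)); move: {2}(size l) => n; elim: n l x => [|n IH] l x.
  case: l => // _ hmu; exists [:: x]; first by rewrite /= eqxx.
  by rewrite zigzag_len1 /=; split => //; have := hmu x (mem_head _ _); lia.
case: l => [|a l] hs hmu.
  exists [:: x]; first by rewrite /= eqxx.
  by rewrite zigzag_len1 /=; split => //; have := hmu x (mem_head _ _); lia.
have hx := hmu x (mem_head _ _).
have hmu_a : forall c, c \in a :: l -> mu <= L c by move=> c hc; apply: hmu; rewrite inE hc orbT.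
have ha : mu <= L a by apply: hmu_a; exact: mem_head.
case: (lerP (L x) (L a)) => hxa.
  (* x is not a peak: drop it *)
  have [s sub [odd_s hs']] := IH l a hs hmu_a.
  exists s; first exact: (subseq_trans sub (subseq_cons _ _)).
  by move: hs'; rewrite total_var_cons2; split => //; lia.
case: l hs hmu hmu_a => [|b l] hs hmu hmu_a.
  exists [:: x]; first by rewrite /= eqxx.
  by rewrite zigzag_len1 total_var_cons2 /=; split => //; lia.
have hb : mu <= L b by apply: hmu_a; rewrite !inE eqxx orbT.
case: (lerP (L b) (L a)) => hba.
  (* a is not a valley: drop it *)
  have hmu_xb : forall c, c \in x :: b :: l -> mu <= L c.
    by move=> c; rewrite in_cons => /orP [/eqP -> // | hc]; apply: hmu_a; rewrite in_cons hc orbT.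
  have [s sub [odd_s hs']] := IH (b :: l) x hs hmu_xb.
  exists s; first exact: (subseq_trans sub (cat_subseq (subseq_refl [:: x]) (subseq_cons _ a))).
  by move: hs'; rewrite !total_var_cons2; split => //; lia.
(* x is a peak and a a valley: keep both *)
have hmu_b : forall c, c \in b :: l -> mu <= L c.
  by move=> c hc; apply: hmu_a; rewrite inE hc orbT.
have [s sub [odd_s hs']] := IH l b (leq_trans (leqnSn _) hs) hmu_b.
exists [:: x, a & s]; first by rewrite /= !eqxx.
by move: hs'; rewrite zigzag_len2 !total_var_cons2 /= negbK; split => //; lia.
Qed.

(* A long sequence contains a long odd zigzag: if l' = l'' ++ [:: y] is an even
   prefix of l, the zigzag lengths of x :: l' and of l'' add up to
   2 |l''| + L x + L y, so one of them is at least |l''| + mu. *)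
Lemma size_zigzag (l : seq A) x mu :
  (forall c, c \in x :: l -> mu <= L c) ->
  exists2 s, subseq s (x :: l) & odd (size s) /\ (size l)%:Z - 2 + mu <= zigzag_len s.
Proof.
move=> hmu; have hx := hmu x (mem_head _ _).
case: (leqP (size l) 1) => hl.
  exists [:: x]; first by rewrite /= eqxx sub0seq.
  by rewrite zigzag_len1; split => //; lia.
pose l2 := if odd (size l) then take (size l).-1 l else l.
have sub_l2 : subseq l2 l by rewrite /l2; case: ifP => _ //; exact: take_subseq.
have size_l2 : size l2 = if odd (size l) then (size l).-1 else size l.
  by rewrite /l2; case: ifP => _ //; rewrite size_take; case: (size l) hl => //= k _; rewrite ltnSn.
have even_l2 : ~~ odd (size l2).
  by rewrite size_l2; case: ifP => h; [move: h hl; case: (size l) | rewrite h].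
have : (0 < size l2)%N by rewrite size_l2; case: ifP => _; lia.
move: sub_l2 size_l2 even_l2; case/lastP: l2 => // mid y sub_l2 size_l2 even_l2 _.
have odd_mid : odd (size mid) by move: even_l2; rewrite size_rcons /= negbK.
have hy : mu <= L y.
  by apply: hmu; rewrite inE (mem_subseq sub_l2) ?orbT // mem_rcons mem_head.
have sum2 : zigzag_len (x :: rcons mid y) + zigzag_len mid = 2 * (size mid)%:Z + L x + L y.
  by rewrite /zigzag_len /= alt_sum_rcons odd_mid size_rcons; lia.
have size_mid : (size l)%:Z - 2 <= (size mid)%:Z.
  by move: size_l2; rewrite size_rcons; case: ifP => _; lia.
case: (lerP (zigzag_len mid) (zigzag_len (x :: rcons mid y))) => h.
  exists (x :: rcons mid y); first exact: (cat_subseq (subseq_refl [:: x]) sub_l2).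
  by rewrite /= size_rcons /= odd_mid; split => //; lia.
exists mid; last by split => //; lia.
by apply: (subseq_trans _ (subseq_cons _ _)); apply: (subseq_trans _ sub_l2); exact: subseq_rcons.
Qed.

(* A tile is a pair (first, last) of elements; alt_ends b tl picks the last
   element of the first tile when b is true, and then alternates. *)
Fixpoint alt_ends (B : Type) (b : bool) (tl : seq (B * B)) : seq B :=
  if tl is t :: tl' then (if b then t.2 else t.1) :: alt_ends (~~ b) tl' else [::].

Fixpoint tile_gain (tl : seq (A * A)) : int :=
  if tl is t :: tl' then L t.2 - L t.1 + tile_gain tl' else 0.

(* Each increase inside a tile after the first one is bounded by a step of one of
   the two alternating chains of ends plus a step of the chain of first elements. *)
Lemma tile_gain_le_var tl :
  tile_gain (behead tl) <=
    total_var (alt_ends true tl) + total_var (alt_ends false tl) + 2 * total_var (map fst tl).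
Proof.
elim: tl => [|t1 tl IH] /=; first lia.
case: tl IH => [|t2 tl] /= IH; first lia.
by move: IH; case: tl => [|t3 tl] /=; lia.
Qed.

End WeightedSequences.

Lemma alt_ends_map (B C : Type) (f : B -> C) b (tl : seq (B * B)) :
  alt_ends b [seq (f t.1, f t.2) | t <- tl] = map f (alt_ends b tl).
Proof. by elim: tl b => [|t tl IH] b //=; rewrite IH; case: b. Qed.

(* From now on a chord is recorded as the pair (p, q) of the positions of its
   ends on X and on Y.  The chord c comes before d along X: *)
Definition ltX (c d : nat * nat) : bool := (c.1 < d.1)%N.

(* d can follow c in a zigzag: further along X, closer to the start of Y. *)
Definition descends (c d : nat * nat) : bool := (c.1 < d.1)%N && (d.2 < c.2)%N.

Lemma descends_trans : transitive descends.
Proof. by move=> b a c; rewrite /descends; lia. Qed.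

(* The length of the path from the start of X along the chord c to the start of Y. *)
Definition weight (c : nat * nat) : int := (c.1 + c.2 + 1)%:Z.

Lemma exists_min (A : eqType) (F : A -> int) (x : A) (s : seq A) :
  exists2 c, c \in x :: s & forall d, d \in x :: s -> (F c <= F d)%R.
Proof.
elim: s x => [|y s IH] x; first by exists x => [|d]; rewrite ?mem_head // inE => /eqP ->.
have [c hc hmin] := IH y; case: (lerP (F x) (F c)) => h.
  exists x => [|d]; first exact: mem_head.
  by rewrite in_cons => /orP [/eqP -> // | hd]; apply: le_trans h (hmin d hd).
exists c => [|d]; first by rewrite in_cons hc orbT.
by rewrite in_cons => /orP [/eqP -> | hd]; [exact: ltW | exact: hmin].
Qed.

Section Tiles.
Variable CS : seq (nat * nat).
Hypothesis CS_sorted : sorted ltX CS.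
Local Notation d0 := ((0%N, 0%N) : nat * nat).
Local Notation m := (size CS).

Definition xpos (i : nat) : nat := (nth d0 CS i).1.
Definition ypos (i : nat) : nat := (nth d0 CS i).2.

Lemma xpos_lt i j : (i < j < m)%N -> (xpos i < xpos j)%N.
Proof.
move=> /andP [hij hj]; have hi : (i < m)%N by lia.
have ltX_trans : transitive ltX by move=> a b c; rewrite /ltX; lia.
by have := @sorted_ltn_nth _ ltX ltX_trans d0 CS CS_sorted i j hi hj hij.
Qed.

Lemma xpos_gap i k : (i + k < m)%N -> (xpos i + k <= xpos (i + k))%N.
Proof.
elim: k => [|k IH] h; first by rewrite !addn0.
have := IH ltac:(lia); have := @xpos_lt (i + k) (i + k.+1) ltac:(lia); lia.
Qed.

Definition tile_start (i : nat) : nat := find (fun c : nat * nat => (c.2 <= ypos i)%N) CS.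

Lemma tile_start_le i : (i < m)%N -> (tile_start i <= i)%N.
Proof.
move=> hi; rewrite leqNgt; apply/negP => h.
by have := before_find d0 h; rewrite /= leqnn.
Qed.

Lemma ypos_tile_start i : (i < m)%N -> (ypos (tile_start i) <= ypos i)%N.
Proof.
move=> hi; have hs : has (fun c : nat * nat => (c.2 <= ypos i)%N) CS.
  by rewrite has_find; apply: leq_ltn_trans (tile_start_le hi) hi.
exact: (nth_find d0 hs).
Qed.

Lemma ypos_before_tile i j : (j < tile_start i)%N -> (ypos i < ypos j)%N.
Proof. by move=> h; have := before_find d0 h; rewrite /ypos /=; lia. Qed.

Definition is_tile (t : nat * nat) : bool :=
  [&& (t.1 <= t.2)%N, (t.2 < m)%N, (ypos t.1 <= ypos t.2)%N &
      [forall j : 'I_(t.1), (ypos t.2 < ypos j)%N]].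

Definition next_tile (t t' : nat * nat) : bool := t'.1 == t.2.+1.

Fixpoint tiles_card (tl : seq (nat * nat)) : nat :=
  if tl is t :: tl' then (t.2 - t.1).+1 + tiles_card tl' else 0.

Lemma tiles_card_rcons tl t : tiles_card (rcons tl t) = tiles_card tl + (t.2 - t.1).+1.
Proof. by elim: tl => [|a tl IH] /=; lia. Qed.

Lemma tiling n : (n <= m)%N ->
  exists tl, [/\ all is_tile tl, sorted next_tile tl, tiles_card tl = n,
                 (n == 0%N) = (tl == [::]) & (0 < n)%N -> (last d0 tl).2 = n.-1].
Proof.
elim/ltn_ind: n => -[_ _|n IH hn]; first by exists [::].
have hs := tile_start_le hn.
have [tl [tl_ok tl_next tl_card tl_nil tl_last]] :=
  IH _ (leq_ltn_trans hs (leqnn _)) (ltnW (leq_ltn_trans hs hn)).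
have t_ok : is_tile (tile_start n, n).
  apply/and4P; split => //=; first exact: ypos_tile_start.
  by apply/forallP => j; apply: ypos_before_tile (ltn_ord j).
exists (rcons tl (tile_start n, n)); split.
- by rewrite all_rcons t_ok tl_ok.
- move: tl_next tl_nil tl_last; case: (tl) => [|t tl'] //= tl_next tl_nil tl_last.
  have h0 : (0 < tile_start n)%N by case: (tile_start n) tl_nil.
  by rewrite rcons_path tl_next /= /next_tile /= (tl_last h0); case: (tile_start n) h0.
- by rewrite tiles_card_rcons tl_card /=; lia.
- by move: tl_nil; case: (tl).
- by rewrite last_rcons.
Qed.

Definition tile_chords (t : nat * nat) : (nat * nat) * (nat * nat) :=
  (nth d0 CS t.1, nth d0 CS t.2).

Lemma tile_ends_descend t t' i i' : is_tile t -> is_tile t' -> next_tile t t' ->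
  i \in [:: t.1; t.2] -> i' \in [:: t'.1; t'.2] -> descends (nth d0 CS i) (nth d0 CS i').
Proof.
move=> /and4P [t_le _ _ _] /and4P [t'_le t'_lt t'_y /forallP t'_above] /eqP t'_next.
rewrite !inE => hi hi'.
have hii : (i <= t.2)%N by case/orP: hi => /eqP ->.
have hi'1 : (t'.1 <= i' <= t'.2)%N by case/orP: hi' => /eqP ->; rewrite ?leqnn //; lia.
have hlt : (i < t'.1)%N by lia.
have hq' : (ypos i' <= ypos t'.2)%N by case/orP: hi' => /eqP ->.
move: hq'; have := t'_above (Ordinal hlt); have := @xpos_lt i i' ltac:(lia).
by rewrite /descends /xpos /ypos /=; lia.
Qed.

Lemma alt_ends_chain tl b : all is_tile tl -> sorted next_tile tl ->
  sorted descends (map (nth d0 CS) (alt_ends b tl)).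
Proof.
rewrite sorted_map; elim: tl b => [|t tl IH] b //= /andP [t_ok tl_ok].
case: tl IH tl_ok => [|t' tl] IH //= tl_ok /andP [t_next tl_next].
apply/andP; split; last by have := IH (~~ b) tl_ok tl_next.
have /andP [t'_ok _] := tl_ok.
by apply: (tile_ends_descend t_ok t'_ok t_next); case: b; rewrite !inE eqxx ?orbT.
Qed.

Lemma first_ends_chain tl : all is_tile tl -> sorted next_tile tl ->
  sorted descends (map (nth d0 CS) (map fst tl)).
Proof.
rewrite sorted_map; elim: tl => [|t tl IH] //= /andP [t_ok tl_ok].
case: tl IH tl_ok => [|t' tl] IH //= tl_ok /andP [t_next tl_next].
apply/andP; split; last by have := IH tl_ok tl_next.
have /andP [t'_ok _] := tl_ok.
by apply: (tile_ends_descend t_ok t'_ok t_next); rewrite !inE eqxx.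
Qed.

Lemma tile_chord_mem t i : is_tile t -> i \in [:: t.1; t.2] -> nth d0 CS i \in CS.
Proof.
case/and4P => t_le t_lt _ _; rewrite !inE => hi; apply: mem_nth.
by case/orP: hi => /eqP ->; [exact: leq_ltn_trans t_le t_lt | ].
Qed.

Lemma alt_ends_mem tl b : all is_tile tl -> all (mem CS) (map (nth d0 CS) (alt_ends b tl)).
Proof.
elim: tl b => [|t tl IH] b //= /andP [t_ok tl_ok]; rewrite IH // andbT.
by apply: (tile_chord_mem t_ok); case: b; rewrite !inE eqxx ?orbT.
Qed.

Lemma first_ends_mem tl : all is_tile tl -> all (mem CS) (map (nth d0 CS) (map fst tl)).
Proof.
elim: tl => [|t tl IH] //= /andP [t_ok tl_ok]; rewrite IH // andbT.
by apply: (tile_chord_mem t_ok); rewrite !inE eqxx.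
Qed.

Lemma alt_ends_tile_chords b tl :
  alt_ends b (map tile_chords tl) = map (nth d0 CS) (alt_ends b tl).
Proof. exact: alt_ends_map. Qed.

Lemma first_tile_chords tl : map fst (map tile_chords tl) = map (nth d0 CS) (map fst tl).
Proof. by rewrite -!map_comp. Qed.

Lemma tile_gain_ge tl : all is_tile tl ->
  ((tiles_card tl)%:Z - (size tl)%:Z <= tile_gain weight (map tile_chords tl))%R.
Proof.
elim: tl => [|t tl IH] //= /andP [/and4P [t_le t_lt t_y _] tl_ok].
have := IH tl_ok; have := @xpos_gap t.1 (t.2 - t.1) ltac:(lia).
rewrite subnKC // /weight /=; move: t_y; rewrite /ypos /xpos; lia.
Qed.

End Tiles.

Section ShortZigzags.
Local Open Scope ring_scope.
Variable CS : seq (nat * nat).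
Hypothesis CS_sorted : sorted ltX CS.
Local Notation d0 := ((0%N, 0%N) : nat * nat).
Local Notation m := (size CS).

(* mu bounds all weights from below, and, towards a contradiction, no odd
   zigzag chain of chords is longer than mu + m / 20. *)
Variable mu : int.
Hypothesis mu_low : forall c, c \in CS -> mu <= weight c.
Hypothesis short_zigzags : forall s, sorted descends s -> odd (size s) -> all (mem CS) s ->
  20 * (zigzag_len weight s - mu) < m%:Z.

Lemma short_subzigzag s t : subseq s t -> sorted descends t -> all (mem CS) t ->
  odd (size s) -> 20 * (zigzag_len weight s - mu) < m%:Z.
Proof.
move=> sub t_chain t_mem odd_s; apply: short_zigzags => //.
  exact: (subseq_sorted descends_trans sub t_chain).
by apply/allP => c /(mem_subseq sub) /(allP t_mem).
Qed.

Lemma chain_low x l : all (mem CS) (x :: l) -> forall c, c \in x :: l -> mu <= weight c.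
Proof. by move=> xl_mem c /(allP xl_mem); apply: mu_low. Qed.

Lemma chain_var_small s : sorted descends s -> all (mem CS) s ->
  10 * total_var weight s <= m%:Z.
Proof.
case: s => [|x l] chain xl_mem //.
have [s sub [odd_s var_s]] := total_var_zigzag (chain_low xl_mem).
have := short_subzigzag sub chain xl_mem odd_s; have := mu_low (allP xl_mem x (mem_head _ _)).
set V := total_var _ _ in var_s *; set Z := zigzag_len _ _ in var_s *; lia.
Qed.

Lemma chain_size_small x l : sorted descends (x :: l) -> all (mem CS) (x :: l) ->
  20 * ((size l)%:Z - 2) < m%:Z.
Proof.
move=> chain xl_mem; have [s sub [odd_s size_s]] := size_zigzag (chain_low xl_mem).
have := short_subzigzag sub chain xl_mem odd_s.
set Z := zigzag_len _ _ in size_s *; set k := size l in size_s *; lia.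
Qed.

(* Under these assumptions there are few chords: a tiling of the chords has few
   tiles, the gain of weight inside the tiles is then almost m, but it is also
   bounded by variations of zigzag chains of tile ends. *)
Lemma few_chords : (m < 12)%N.
Proof.
rewrite ltnNge; apply/negP => m_ge.
have [[|t tl] [tl_ok tl_next tl_card tl_nil _]] := tiling CS_sorted (leqnn m).
  by move: tl_nil; case: (m) m_ge.
have var_alt b :=
  chain_var_small (alt_ends_chain CS_sorted b tl_ok tl_next) (alt_ends_mem b tl_ok).
have first_chain := first_ends_chain CS_sorted tl_ok tl_next.
have var_first := chain_var_small first_chain (first_ends_mem tl_ok).
have size_first := chain_size_small first_chain (first_ends_mem tl_ok).
have /andP [t_ok _] := tl_ok.
have t2_mem : nth d0 CS t.2 \in CS by apply: (tile_chord_mem t_ok); rewrite !inE eqxx orbT.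
have first_tile : 20 * (weight (nth d0 CS t.2) - mu) < m%:Z.
  by have := short_zigzags (s := [:: nth d0 CS t.2]); rewrite zigzag_len1 /= t2_mem; apply.
have t1_low := mu_low (tile_chord_mem t_ok (mem_head t.1 [:: t.2])).
have gain_low := tile_gain_ge CS_sorted tl_ok.
have gain_up : tile_gain weight (map (tile_chords CS) tl) <=
    total_var weight (map (nth d0 CS) (alt_ends true (t :: tl))) +
    total_var weight (map (nth d0 CS) (alt_ends false (t :: tl))) +
    2 * total_var weight (map (nth d0 CS) (map fst (t :: tl))).
  by rewrite -!alt_ends_tile_chords -first_tile_chords; exact: tile_gain_le_var.
have gain_split : tile_gain weight (map (tile_chords CS) (t :: tl)) =
    weight (nth d0 CS t.2) - weight (nth d0 CS t.1) +
    tile_gain weight (map (tile_chords CS) tl) by [].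
rewrite gain_split tl_card /= in gain_low; rewrite !size_map in size_first.
move: (var_alt true) (var_alt false) var_first gain_up; lia.
Qed.

End ShortZigzags.

Theorem long_zigzag (CS : seq (nat * nat)) : sorted ltX CS -> (12 <= size CS)%N ->
  exists s c, [/\ sorted descends s, odd (size s), all (mem CS) s, c \in CS &
                  ((size CS)%:Z <= 20 * (zigzag_len weight s - weight c))%R].
Proof.
move=> CS_sorted m_ge; case E: CS m_ge => [//|x0 s0] m_ge; rewrite -E in m_ge *.
have [c c_in c_min] := exists_min weight x0 s0; rewrite -E in c_in c_min.
apply: NNPP => no_zigzag; suff: (size CS < 12)%N by rewrite ltnNge m_ge.
apply: (few_chords CS_sorted c_min) => s chain odd_s s_mem.
rewrite ltNge; apply/negP => long; apply: no_zigzag; by exists s, c.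
Qed.

Section ZigzagWalk.
Variables (T : finType) (r : rel T) (fx fy : nat -> T) (nX nY : nat) (CS : seq (nat * nat)).
Hypothesis r_sym : symmetric r.
Hypothesis fx_step : forall k, (k.+1 < nX)%N -> r (fx k) (fx k.+1).
Hypothesis fy_step : forall k, (k.+1 < nY)%N -> r (fy k) (fy k.+1).
Hypothesis chord_range : forall c, c \in CS -> (c.1 < nX)%N && (c.2 < nY)%N.
Hypothesis chord_edge : forall c, c \in CS -> r (fx c.1) (fy c.2).
Hypothesis fx_inj : {in gtn nX &, injective fx}.
Hypothesis fy_inj : {in gtn nY &, injective fy}.
Hypothesis fxy_disjoint : forall i j, (i < nX)%N -> (j < nY)%N -> fx i <> fy j.

Local Notation pos := (nat + nat)%type.
Local Notation d0 := ((0%N, 0%N) : nat * nat).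

(* Walks are first built on positions: inl k stands for fx k, inr k for fy k. *)
Definition vertex (u : pos) : T := match u with inl k => fx k | inr k => fy k end.
Definition valid_pos (u : pos) : bool :=
  match u with inl k => (k < nX)%N | inr k => (k < nY)%N end.
Definition pos_rel (u v : pos) : bool := r (vertex u) (vertex v).

Lemma vertex_inj : {in valid_pos &, injective vertex}.
Proof.
case=> [i|i] [j|j] /= hi hj h.
- by rewrite (fx_inj hi hj h).
- by case: (fxy_disjoint hi hj h).
- by case: (fxy_disjoint hj hi (esym h)).
- by rewrite (fy_inj hi hj h).
Qed.

Fixpoint run_x (p n : nat) : seq pos := if n is n'.+1 then inl p.+1 :: run_x p.+1 n' else [::].

Fixpoint run_y (a n : nat) : seq pos := if n is n'.+1 then inr a.-1 :: run_y a.-1 n' else [::].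

Lemma run_x_path p n : (p + n < nX)%N -> path pos_rel (inl p) (run_x p n).
Proof. by elim: n p => [|n IH] p //= h; rewrite /pos_rel /= fx_step ?IH //; lia. Qed.

Lemma run_x_last p n : last (inl p) (run_x p n) = inl (p + n).
Proof. by elim: n p => [|n IH] p /=; rewrite ?addn0 // IH addSnnS. Qed.

Lemma mem_run_x p n (u : pos) :
  (u \in inl p :: run_x p n) = (if u is inl k then (p <= k <= p + n)%N else false).
Proof.
elim: n p => [|n IH] p.
  by rewrite inE addn0; case: u => k //=; apply/eqP/idP => [[->] | h]; [lia | congr inl; lia].
rewrite in_cons IH {IH}; case: u => k //=; rewrite -addSnnS.
apply/idP/idP => [/orP [/eqP [<-] | ] | /andP [lo hi]]; [lia | lia | ].
by case: (ltngtP p k) lo => // [_ _ | ->]; rewrite ?eqxx // hi orbT.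
Qed.

Lemma run_x_uniq p n : uniq (inl p :: run_x p n).
Proof.
by elim: n p => [|n IH] p //; rewrite cons_uniq [run_x p _]/= mem_run_x IH /= andbT; lia.
Qed.

Lemma size_run_x p n : size (run_x p n) = n.
Proof. by elim: n p => [|n IH] p //=; rewrite IH. Qed.

Lemma run_x_valid p n : (p + n < nX)%N -> all valid_pos (run_x p n).
Proof. by elim: n p => [|n IH] p //= h; rewrite IH ?andbT; lia. Qed.

Lemma run_y_path a n : (n <= a)%N -> (a < nY)%N -> path pos_rel (inr a) (run_y a n).
Proof.
elim: n a => [|n IH] [|a] //= h1 h2.
by rewrite /pos_rel /= r_sym fy_step // IH //; lia.
Qed.

Lemma run_y_last a n : (n <= a)%N -> last (inr a) (run_y a n) = inr (a - n).
Proof. by elim: n a => [|n IH] a /= h; rewrite ?subn0 // IH; [congr inr | ]; lia. Qed.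

Lemma mem_run_y a n (u : pos) : (n <= a)%N ->
  (u \in inr a :: run_y a n) = (if u is inr k then (a - n <= k <= a)%N else false).
Proof.
elim: n a => [|n IH] a h.
  by rewrite inE subn0; case: u => k //=; apply/eqP/idP => [[->] | h']; [lia | congr inr; lia].
rewrite in_cons IH {IH}; last lia.
case: u => k //=; apply/idP/idP => [/orP [/eqP [->] | ] | h']; [lia | lia | ].
by case: (ltngtP k a) => [||->]; rewrite ?eqxx //; lia.
Qed.

Lemma run_y_uniq a n : (n <= a)%N -> uniq (inr a :: run_y a n).
Proof.
elim: n a => [|n IH] [|a] h //.
by rewrite cons_uniq [run_y a.+1 _]/= mem_run_y ?IH /=; lia.
Qed.

Lemma size_run_y a n : size (run_y a n) = n.
Proof. by elim: n a => [|n IH] a //=; rewrite IH. Qed.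

Lemma run_y_valid a n : (n <= a)%N -> (a < nY)%N -> all valid_pos (run_y a n).
Proof. by elim: n a => [|n IH] a //= h1 h2; rewrite IH ?andbT; lia. Qed.

(* The walk along an odd zigzag chain c1, d1, c2, ..., ck starting at inl p:
   forwards along X to c1, across c1, back along Y to d1, across d1, forwards
   along X to c2, ..., across ck and finally back along Y to inr 0. *)
Fixpoint zigzag_walk (p : nat) (s : seq (nat * nat)) : seq pos :=
  match s with
  | [::] => [::]
  | c :: s1 => run_x p (c.1 - p) ++ inr c.2 ::
      (match s1 with
       | [::] => run_y c.2 c.2
       | d :: s2 => run_y c.2 (c.2 - d.2) ++ inl d.1 :: zigzag_walk d.1 s2
       end)
  end.

Lemma zigzag_walk1 p c : inl p :: zigzag_walk p [:: c] =
  (inl p :: run_x p (c.1 - p)) ++ (inr c.2 :: run_y c.2 c.2).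
Proof. by []. Qed.

Lemma zigzag_walk2 p c d s : inl p :: zigzag_walk p [:: c, d & s] =
  (inl p :: run_x p (c.1 - p)) ++ (inr c.2 :: run_y c.2 (c.2 - d.2)) ++
  (inl d.1 :: zigzag_walk d.1 s).
Proof. by []. Qed.

Definition zigzag_from (p : nat) (s : seq (nat * nat)) : bool :=
  [&& odd (size s), sorted descends s, all (mem CS) s & (p <= (head d0 s).1)%N].

Lemma zigzag_from1 p c : zigzag_from p [:: c] -> (p <= c.1)%N /\ c \in CS.
Proof. by case/and4P => _ _ /andP [c_in _] p_le. Qed.

Lemma zigzag_from2 p c d s : zigzag_from p [:: c, d & s] ->
  [/\ (p <= c.1 < d.1)%N, (d.2 < c.2)%N, c \in CS, d \in CS &
      zigzag_from d.1 s /\ ((head d0 s).2 < d.2)%N].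
Proof.
case/and4P => /= odd_s /andP [/andP [cd1 cd2] chain] /and3P [c_in d_in s_in] p_le.
case: s odd_s chain s_in => [|e s] //= odd_s /andP [/andP [de1 de2] chain] s_in.
by rewrite /zigzag_from /= -(negbK (~~ _)) odd_s chain s_in (ltnW de1) p_le cd1 cd2 de2 c_in d_in.
Qed.

Lemma zigzag_walk_last p s : odd (size s) -> last (inl p) (zigzag_walk p s) = inr 0.
Proof.
elim/seq_pair_ind: s p => [|c|c d s IH] p //= odd_s.
  by rewrite last_cat /= run_y_last // subnn.
by move: odd_s; rewrite negbK last_cat /= last_cat /= => /IH ->.
Qed.

Lemma size_zigzag_walk p s : zigzag_from p s ->
  Posz (size (zigzag_walk p s)) = (zigzag_len weight s - Posz p)%R.
Proof.
elim/seq_pair_ind: s p => [|c|c d s IH] p; first by case/and4P.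
  case/zigzag_from1 => p_le _.
  by rewrite /= size_cat size_run_x /= size_run_y zigzag_len1 [weight c]/weight; lia.
case/zigzag_from2 => /andP [p_le cd1] cd2 _ _ [s_ok _].
rewrite /= size_cat size_run_x /= size_cat size_run_y /= zigzag_len2.
rewrite [weight c]/weight [weight d]/weight.
by move: (IH _ s_ok); lia.
Qed.

Lemma zigzag_walk_path p s : zigzag_from p s -> (p < nX)%N ->
  path pos_rel (inl p) (zigzag_walk p s).
Proof.
elim/seq_pair_ind: s p => [|c|c d s IH] p; first by case/and4P.
  case/zigzag_from1 => p_le /[dup] c_in /chord_range /andP [c1 c2] p_lt.
  rewrite /= cat_path run_x_path ?run_x_last ?subnKC //= {1}/pos_rel /= chord_edge //.
  exact: run_y_path.
case/zigzag_from2 => /andP [p_le cd1] cd2 /[dup] c_in /chord_range /andP [c1 c2].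
move=> /[dup] d_in /chord_range /andP [d1 d2] [s_ok _] p_lt.
rewrite /= cat_path run_x_path ?run_x_last ?subnKC //= {1}/pos_rel /= chord_edge //=.
rewrite cat_path run_y_path ?run_y_last ?leq_subr //= subKn ?(ltnW cd2) //.
by rewrite {1}/pos_rel /= r_sym chord_edge // IH.
Qed.

Lemma zigzag_walk_valid p s : zigzag_from p s -> all valid_pos (zigzag_walk p s).
Proof.
elim/seq_pair_ind: s p => [|c|c d s IH] p; first by case/and4P.
  case/zigzag_from1 => p_le /chord_range /andP [c1 c2].
  by rewrite /= all_cat run_x_valid ?subnKC //= c2 run_y_valid.
case/zigzag_from2 => /andP [p_le cd1] cd2 /chord_range /andP [c1 c2].
move=> /chord_range /andP [d1 d2] [s_ok _].
by rewrite /= all_cat run_x_valid ?subnKC //= c2 all_cat run_y_valid ?leq_subr //= d1 IH.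
Qed.

(* The walk from inl p along s never comes back before p on the first path, nor
   goes beyond the first chord of s on the second path. *)
Definition in_box (p b : nat) (u : pos) : bool :=
  match u with inl k => (p <= k)%N | inr k => (k <= b)%N end.

Lemma zigzag_walk_box p s : zigzag_from p s ->
  forall u : pos, u \in inl p :: zigzag_walk p s -> in_box p (head d0 s).2 u.
Proof.
elim/seq_pair_ind: s p => [|c|c d s IH] p; first by case/and4P.
  case/zigzag_from1 => p_le _ u.
  by rewrite zigzag_walk1 mem_cat mem_run_x mem_run_y //; case: u => k /=; lia.
case/zigzag_from2 => /andP [p_le cd1] cd2 _ _ [/IH box_s s_head] u.
rewrite zigzag_walk2 !mem_cat mem_run_x mem_run_y ?leq_subr //.
by case: u (box_s u) => k /=; lia.
Qed.

Lemma uniq_cat_sep (A : eqType) (s1 s2 : seq A) :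
  uniq s1 -> uniq s2 -> {in s1, forall u, u \notin s2} -> uniq (s1 ++ s2).
Proof.
move=> uniq1 uniq2 sep; rewrite cat_uniq uniq1 uniq2 andbT.
by apply/hasPn => u u2; apply/negP => /sep; rewrite u2.
Qed.

Lemma zigzag_walk_uniq p s : zigzag_from p s -> uniq (inl p :: zigzag_walk p s).
Proof.
elim/seq_pair_ind: s p => [|c|c d s IH] p; first by case/and4P.
  case/zigzag_from1 => p_le _; rewrite zigzag_walk1 uniq_cat_sep ?run_x_uniq ?run_y_uniq //.
  by move=> u; rewrite mem_run_x mem_run_y //; case: u.
move=> /zigzag_from2 [/andP [p_le cd1] cd2 _ _ [s_ok s_head]].
have box_s := zigzag_walk_box s_ok.
rewrite zigzag_walk2 uniq_cat_sep ?run_x_uniq ?uniq_cat_sep ?run_y_uniq ?leq_subr ?IH //.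
  move=> u; rewrite mem_run_y ?leq_subr //; case: u (box_s u) => // k /=.
  by case: (inr k \in _) => // /(_ isT); lia.
move=> u; rewrite mem_run_x mem_cat mem_run_y ?leq_subr //; case: u (box_s u) => // k /=.
by case: (inl k \in _) => [/(_ isT)|_]; lia.
Qed.

Theorem zigzag_path s : zigzag_from 0 s -> (0 < nX)%N ->
  exists2 p, gpath r (fx 0) (fy 0) p & Posz (size p) = zigzag_len weight s.
Proof.
move=> s_ok X_ne; exists (map vertex (zigzag_walk 0 s)); last first.
  by rewrite size_map size_zigzag_walk // subr0.
have valid : all valid_pos (inl 0 :: zigzag_walk 0 s) by rewrite /= X_ne zigzag_walk_valid.
split.
- by rewrite -[fx 0]/(vertex (inl 0)) path_map; apply: zigzag_walk_path.
- rewrite -[fx 0 :: _]/(map vertex (inl 0 :: _)) (map_inj_in_uniq (f := vertex)).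
    exact: zigzag_walk_uniq.
  by move=> u v /(allP valid) u_ok /(allP valid) v_ok; apply: vertex_inj.
- by rewrite -[fx 0]/(vertex (inl 0)) last_map zigzag_walk_last //; case/and4P: s_ok.
Qed.

End ZigzagWalk.

Lemma scaled_gap (a b m : nat) : (m%:Z <= 20 * (b%:Z - a%:Z))%R ->
  (a%:R + (1 / 20) * m%:R <= b%:R :> rat)%R.
Proof.
move=> gap; have : (m + 20 * a <= 20 * b)%N by lia.
rewrite -(ler_nat rat) natrD !natrM; lra.
Qed.

Section EndsOfSectionPair.
Variables (T : finType) (e r : rel T) (xt yt : T) (Xs Ys : seq T).
Local Notation X := (xt :: Xs).
Local Notation Y := (yt :: Ys).
Hypothesis r_sym : symmetric r.
Hypothesis X_walk : path r xt Xs.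
Hypothesis Y_walk : path r yt Ys.
Hypothesis chord_r : forall x y, x \in X -> y \in Y -> e x y -> r x y.
Hypothesis X_uniq : uniq X.
Hypothesis Y_uniq : uniq Y.
Hypothesis XY_disjoint : [disjoint X & Y].
Hypothesis one_chord : forall x, x \in X -> (#|[set y in Y | e x y]| <= 1)%N.

Local Notation m := #|chords e X Y|.

Definition leX (c d : nat * nat) : bool := (c.1 <= d.1)%N.

Definition chord_positions : seq (nat * nat) :=
  sort leX [seq (index c.1 X, index c.2 Y) | c <- enum (chords e X Y)].

Lemma size_chord_positions : size chord_positions = m.
Proof. by rewrite size_sort size_map -cardE. Qed.

Lemma chord_positionsP (c : nat * nat) : c \in chord_positions ->
  [/\ (c.1 < size X)%N, (c.2 < size Y)%N & e (nth xt X c.1) (nth yt Y c.2)].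
Proof.
rewrite mem_sort => /mapP [[x y]]; rewrite mem_enum inE => /andP [/andP [x_in y_in] xy] ->.
by split; rewrite ?index_mem ?nth_index.
Qed.

(* As distinct chords have distinct ends on X, the list is strictly sorted. *)
Lemma chord_positions_sorted : sorted ltX chord_positions.
Proof.
rewrite (_ : ltX = relpre fst ltn) // -sorted_map ltn_sorted_uniq_leq sorted_map.
rewrite sort_sorted ?andbT => [|c d]; last exact: leq_total.
rewrite (perm_uniq (perm_map fst (permEl (perm_sort _ _)))) -map_comp map_inj_in_uniq ?enum_uniq //.
move=> [x y] [x' y']; rewrite !mem_enum !in_set /= => /andP [/andP [x_in y_in] xy].
move=> /andP [/andP [x'_in y'_in] xy'] /(congr1 (nth xt X)); rewrite !nth_index // => eq_x.
move: xy'; rewrite -eq_x => xy'; have /card_le1_eqP one := one_chord x_in.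
by congr pair; apply: one; rewrite in_set ?y_in ?y'_in.
Qed.

Theorem paths_from_tops : (12 <= m)%N ->
  exists P P', [/\ gpath r xt yt P, gpath r xt yt P' &
                   ((size P)%:R + (1 / 20) * m%:R <= (size P')%:R :> rat)%R].
Proof.
rewrite -size_chord_positions => m_ge.
have [s [c [chain odd_s s_in c_in long]]] := long_zigzag chord_positions_sorted m_ge.
have walk s' : zigzag_from chord_positions 0 s' ->
    exists2 p, gpath r xt yt p & Posz (size p) = zigzag_len weight s'.
  move=> s'_ok; apply: (@zigzag_path T r (nth xt X) (nth yt Y) (size X) (size Y)) s'_ok _ => //.
  - by move=> k k_lt; apply: (pathP xt X_walk).
  - by move=> k k_lt; apply: (pathP yt Y_walk).
  - by move=> d /chord_positionsP [-> ->].
  - move=> d /chord_positionsP [d1 d2 de].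
    by apply: chord_r; rewrite ?mem_nth.
  - by move=> i j i_lt j_lt /eqP; rewrite nth_uniq // => /eqP.
  - by move=> i j i_lt j_lt /eqP; rewrite nth_uniq // => /eqP.
  - move=> i j i_lt j_lt eq_ij; have := disjointFr XY_disjoint (mem_nth xt i_lt).
    by rewrite eq_ij mem_nth.
have s_ok : zigzag_from chord_positions 0 s by rewrite /zigzag_from odd_s chain s_in.
have c_ok : zigzag_from chord_positions 0 [:: c] by rewrite /zigzag_from /= c_in.
have [P' P'_path P'_size] := walk s s_ok.
have [P P_path P_size] := walk [:: c] c_ok.
exists P, P'; split => //; apply: scaled_gap.
by rewrite P_size P'_size zigzag_len1 size_chord_positions in long *.
Qed.

End EndsOfSectionPair.

Section SectionPairGraph.
Variables (T : finType) (e : rel T).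

Lemma Hrel_sym (X Y : seq T) : symmetric e -> symmetric (Hrel e X Y).
Proof.
move=> e_sym u v; rewrite /Hrel /path_edge /chord e_sym.
rewrite (orbC ((v, u) \in _)) (orbC ((v, u) \in zip Y _)).
by rewrite (andbC (v \in X)) (andbC (v \in Y)) (orbC (_ && (v \in X))).
Qed.

Lemma Hrel_chord (X Y : seq T) x y : x \in X -> y \in Y -> e x y -> Hrel e X Y x y.
Proof. by move=> x_in y_in xy; rewrite /Hrel /chord xy x_in y_in !orbT. Qed.

Lemma path_edge_walk (x : T) s : path (path_edge (x :: s)) x s.
Proof.
have zip_walk : forall (y : T) (t : seq T), path (fun u v => (u, v) \in zip (y :: t) t) y t.
  move=> y t; elim: t y => [|z t IH] y //=; rewrite mem_head /=.
  by apply: sub_path (IH z) => u v uv; rewrite in_cons uv orbT.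
by apply: sub_path (zip_walk x s) => u v uv; rewrite /path_edge uv.
Qed.

Lemma Hrel_walk_l x Xs Y : path (Hrel e (x :: Xs) Y) x Xs.
Proof. by apply: sub_path (path_edge_walk x Xs) => u v uv; rewrite /Hrel uv. Qed.

Lemma Hrel_walk_r X y Ys : path (Hrel e X (y :: Ys)) y Ys.
Proof. by apply: sub_path (path_edge_walk y Ys) => u v uv; rewrite /Hrel uv orbT. Qed.

Lemma chords_eq_mem (X1 X2 Y1 Y2 : seq T) :
  X1 =i X2 -> Y1 =i Y2 -> chords e X1 Y1 = chords e X2 Y2.
Proof. by move=> eX eY; apply/setP => -[x y]; rewrite !in_set /= eX eY. Qed.

End SectionPairGraph.

Lemma rev_walk (T : Type) (r : rel T) x s :
  symmetric r -> path r x s -> path r (last x s) (rev (belast x s)).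
Proof. by move=> r_sym; rewrite rev_path; apply: sub_path => u v; rewrite r_sym. Qed.

Lemma rev_cons_last (T : Type) (x : T) s : last x s :: rev (belast x s) = rev (x :: s).
Proof. by rewrite [x :: s]lastI rev_rcons. Qed.

Theorem lemma4p6 :
  exists c : rat, (0 < c)%R /\
  forall (T : finType) (e : rel T), symmetric e -> irreflexive e ->
  forall (xt yt : T) (Xs Ys : seq T),
    let X := xt :: Xs in
    let Y := yt :: Ys in
    let xb := last xt Xs in
    let yb := last yt Ys in
    gpath e xt xb Xs -> gpath e yt yb Ys ->
    [disjoint X & Y] ->
    let m := #|chords e X Y| in
    12 <= m ->
    (forall x, x \in X -> #|[set y in Y | e x y]| <= 1) ->
    (exists P P' : seq T,
        [/\ gpath (Hrel e X Y) xt yt P, gpath (Hrel e X Y) xt yt P' &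
            ((size P)%:R + c * m%:R <= (size P')%:R)%R]) /\
    (exists Q Q' : seq T,
        [/\ gpath (Hrel e X Y) xb yb Q, gpath (Hrel e X Y) xb yb Q' &
            ((size Q)%:R + c * m%:R <= (size Q')%:R)%R]).
Proof.
exists (1 / 20)%R; split => // T e e_sym _ xt yt Xs Ys X Y xb yb [_ X_uniq _] [_ Y_uniq _].
move=> XY_disjoint m m_ge one_chord; have H_sym := Hrel_sym X Y e_sym.
split; first exact: paths_from_tops H_sym (Hrel_walk_l _ _ _ _) (Hrel_walk_r _ _ _ _)
  (@Hrel_chord _ e X Y) X_uniq Y_uniq XY_disjoint one_chord m_ge.
(* The bottom ends are the top ends of the reversed section-pair. *)
have revX : xb :: rev (belast xt Xs) =i X by move=> x; rewrite rev_cons_last mem_rev.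
have revY : yb :: rev (belast yt Ys) =i Y by move=> y; rewrite rev_cons_last mem_rev.
rewrite /m -(chords_eq_mem e revX revY) in m_ge *.
apply: paths_from_tops => //.
- exact: rev_walk H_sym (Hrel_walk_l _ _ _ _).
- exact: rev_walk H_sym (Hrel_walk_r _ _ _ _).
- by move=> x y; rewrite revX revY; apply: Hrel_chord.
- by rewrite rev_cons_last rev_uniq.
- by rewrite rev_cons_last rev_uniq.
- by rewrite (eq_disjoint revX) (eq_disjoint_r revY).
- move=> x; rewrite revX => /one_chord; apply: leq_trans; apply: subset_leq_card.
  by apply/subsetP => y; rewrite !in_set revY.
Qed.
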